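(* Let $a<b$, integers $1\le p\le n$, $P_1=P_1^T\in\mathbb{R}^{n\times n}$ invertible, $P_0=-P_0^T\in\mathbb{R}^{n\times n}$, $\mathcal{X}=L^2([a,b];\mathbb{R}^n)$, $Z$ a real Hilbert space, $H\in\mathcal{L}(Z,\mathcal{X})$, $\delta t>0$ fixed, and $\mathcal{J}e=P_1\frac{de}{d\zeta}+P_0e$ for $e\in H^1([a,b];\mathbb{R}^n)$. Let $\mathcal{D}^A$ be the set of all $(\delta f_\varepsilon,\delta f_w,\delta f_\partial,e_\varepsilon,e_w,e_\partial)\in(\mathcal{X}\times Z\times\mathbb{R}^n)^2$ with $e_\varepsilon\in H^1([a,b];\mathbb{R}^n)$, $\delta f_\varepsilon=\mathcal{J}e_\varepsilon\delta t+H\delta f_w$, $\delta f_\partial=\frac{1}{\sqrt2}P_1(e_\varepsilon(b)-e_\varepsilon(a))\delta t$, $e_\partial=\frac{1}{\sqrt2}(e_\varepsilon(b)+e_\varepsilon(a))$, $e_w=H^*e_\varepsilon$, where the boundary ports are split as $\delta f_\partial=(\delta f_{\partial,n-p},f_p)$, $e_\partial=(e_{\partial,n-p},e_p)$ with $\delta f_{\partial,n-p},e_{\partial,n-p}\in\mathbb{R}^{n-p}$ and $f_p,e_p\in\mathbb{R}^p$. Let $\mathcal{F}_3,\mathcal{E}_3$ be real Hilbert spaces, $j_3:\mathcal{F}_3\to\mathcal{E}_3$ a unitary invertible linear map, and let $\mathcal{D}^B\subset(\mathcal{F}_3\times\mathbb{R}^p)\times(\mathcal{E}_3\times\mathbb{R}^p)$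 be a Dirac structure with respect to the pairing $\langle(f^B,f,e^B,e),(\tilde f^B,\tilde f,\tilde e^B,\tilde e)\rangle=\langle f^B,j_3^{-1}\tilde e^B\rangle+\langle e^B,j_3\tilde f^B\rangle-\langle f,\tilde e\rangle-\langle e,\tilde f\rangle$. Define the composition $\mathcal{D}^A\circ\mathcal{D}^B$ as the set of all $(\delta f^A,f^B,e^A,e^B)$ with $\delta f^A=(\delta f_\varepsilon,\delta f_w,\delta f_{\partial,n-p})$, $e^A=(e_\varepsilon,e_w,e_{\partial,n-p})$, $f^B\in\mathcal{F}_3$, $e^B\in\mathcal{E}_3$, for which there exist $f_p,e_p\in\mathbb{R}^p$ with $(\delta f^A,f_p,e^A,e_p)\in\mathcal{D}^A$ and $(f^B,-f_p,e^B,e_p)\in\mathcal{D}^B$, and equip it with the pairing $$\langle\mathfrak{d},\tilde{\mathfrak{d}}\rangle_\dagger=\langle\delta f_\varepsilon,\tilde e_\varepsilon\rangle-\langle\delta f_w,\tilde e_w\rangle-\langle\delta f_{\partial,n-p},\tilde e_{\partial,n-p}\rangle+\langle f^B,j_3^{-1}\tilde e^B\rangle+\langle e_\varepsilon,\delta\tilde f_\varepsilon\rangle-\langle e_w,\delta\tilde f_w\rangle-\langle e_{\partial,n-p},\delta\tilde f_{\partial,n-p}\rangle+\langle e^B,j_3\tilde f^B\rangle.$$ Then $\langle\mathfrak{d},\mathfrak{d}\rangle_\dagger=0$ for every $\mathfrak{d}\in\mathcal{D}^A\circ\mathcal{D}^B$.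
   Context: Inner products on $\mathcal{X}$ are the standard $L^2$ ones and $H^*$ is the $L^2$-adjoint of $H$. A Dirac structure with respect to a symmetric bilinear pairing on a bond space is a linear subspace equal to its orthogonal complement with respect to that pairing. $\mathcal{D}^A$ is the stochastic port-Hamiltonian Dirac structure, split into the part $\mathcal{X}\times Z\times\mathbb{R}^{n-p}$ (with $j_1=\mathrm{diag}(I_\mathcal{X},-I_Z,-I_{\mathbb{R}^{n-p}})$) and the interconnection part $\mathbb{R}^p$ (with $j_2=-I_{\mathbb{R}^p}$); the interconnection of $\mathcal{D}^A$ and $\mathcal{D}^B$ is through the $p$ boundary ports $f_p,e_p$. *)

From HB Require Import structures.
From mathcomp Require Import all_boot all_order all_algebra.
From mathcomp Require Import all_classical all_reals all_analysis.
Set Implicit Arguments. Unset Strict Implicit. Unset Printing Implicit Defensive.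
Import Order.TTheory GRing.Theory Num.Theory.
Import numFieldNormedType.Exports.
Local Open Scope classical_set_scope.
Local Open Scope ring_scope.

Section Defs.
Variable R : realType.

Definition itv_ab (a b : R) : set R := [set x | a <= x <= b].

Notation leb := (@lebesgue_measure R).

Definition dotv k (u v : 'cV[R]_k) : R := \sum_(i < k) u i 0 * v i 0.

Definition hilbert_ip (V : completeNormedModType R) (ip : V -> V -> R) : Prop :=
  [/\ (forall x y, ip x y = ip y x),
      (forall (c : R) x y z, ip (c *: x + y) z = c * ip x z + ip y z)
    & (forall x, ip x x = `|x| ^+ 2)].

Definition L2 n (a b : R) (u : R -> 'cV[R]_n) : Prop :=
  forall i : 'I_n,
    measurable_fun (itv_ab a b) (fun x => u x i 0) /\
    leb.-integrable (itv_ab a b) (fun x => ((u x i 0) ^+ 2)%:E).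

Definition L2eq n (a b : R) (u v : R -> 'cV[R]_n) : Prop :=
  {ae leb, forall x, itv_ab a b x -> u x = v x}.

Definition L2ip n (a b : R) (u v : R -> 'cV[R]_n) : R :=
  \sum_(i < n) Rintegral leb (itv_ab a b) (fun x => u x i 0 * v x i 0).

(** [e] belongs to H^1([a,b];R^n) with weak derivative [g] in L^2, [e] being
    the (absolutely) continuous representative:
    e(x) = e(a) + \int_a^x g  for every x in [a,b]. *)
Definition H1_with_deriv n (a b : R) (e g : R -> 'cV[R]_n) : Prop :=
  L2 a b g /\
  forall x, a <= x <= b -> forall i : 'I_n,
    e x i 0 = e a i 0 + Rintegral leb (itv_ab a x) (fun t => g t i 0).

Definition bounded_linear_to_L2 n (a b : R) (Z : completeNormedModType R)
    (H : Z -> R -> 'cV[R]_n) : Prop :=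
  [/\ (forall z, L2 a b (H z)),
      (forall (c : R) z1 z2,
          L2eq a b (H (c *: z1 + z2)) (fun x => c *: H z1 x + H z2 x))
    & exists C : R, forall z, L2ip a b (H z) (H z) <= C * `|z| ^+ 2].

Definition is_adjoint n (a b : R) (Z : completeNormedModType R)
    (ipZ : Z -> Z -> R) (H : Z -> R -> 'cV[R]_n) (Hs : (R -> 'cV[R]_n) -> Z) :=
  forall z x, L2 a b x -> L2ip a b (H z) x = ipZ z (Hs x).

(** The stochastic port-Hamiltonian Dirac structure D^A, with n = m + p
    (m = n - p): membership of (df_eps, df_w, df_d, e_eps, e_w, e_d). *)
Definition DA (m p : nat) (a b : R) (P1 P0 : 'M[R]_(m + p))
    (Z : completeNormedModType R) (H : Z -> R -> 'cV[R]_(m + p))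
    (Hs : (R -> 'cV[R]_(m + p)) -> Z) (dt : R)
    (dfe : R -> 'cV[R]_(m + p)) (dfw : Z) (dfd : 'cV[R]_(m + p))
    (ee : R -> 'cV[R]_(m + p)) (ew : Z) (ed : 'cV[R]_(m + p)) : Prop :=
  [/\ L2 a b dfe /\ L2 a b ee,
      (exists g, H1_with_deriv a b ee g /\
         L2eq a b dfe (fun x => dt *: (P1 *m g x + P0 *m ee x) + H dfw x)),
      dfd = ((Num.sqrt 2)^-1 * dt) *: (P1 *m (ee b - ee a)),
      ed = (Num.sqrt 2)^-1 *: (ee b + ee a)
    & ew = Hs ee].

Definition pairB (p : nat) (F3 E3 : completeNormedModType R)
    (ipF : F3 -> F3 -> R) (ipE : E3 -> E3 -> R)
    (j3 : F3 -> E3) (j3inv : E3 -> F3)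
    (x y : (F3 * 'cV[R]_p) * (E3 * 'cV[R]_p)) : R :=
  let: ((fB, f), (eB, e)) := x in
  let: ((tfB, tf), (teB, te)) := y in
  ipF fB (j3inv teB) + ipE eB (j3 tfB) - dotv f te - dotv e tf.

Definition dirac_structure (V : lmodType R) (pair : V -> V -> R) (D : set V) : Prop :=
  [/\ D 0,
      (forall (c : R) x y, D x -> D y -> D (c *: x + y))
    & (forall x, D x <-> (forall y, D y -> pair y x = 0))].

Definition DAoDB (m p : nat) (a b : R) (P1 P0 : 'M[R]_(m + p))
    (Z : completeNormedModType R) (H : Z -> R -> 'cV[R]_(m + p))
    (Hs : (R -> 'cV[R]_(m + p)) -> Z) (dt : R)
    (F3 E3 : completeNormedModType R)
    (DB : set ((F3 * 'cV[R]_p) * (E3 * 'cV[R]_p)))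
    (dfe : R -> 'cV[R]_(m + p)) (dfw : Z) (dfdm : 'cV[R]_m) (fB : F3)
    (ee : R -> 'cV[R]_(m + p)) (ew : Z) (edm : 'cV[R]_m) (eB : E3) : Prop :=
  exists (fp ep : 'cV[R]_p),
    DA a b P1 P0 H Hs dt dfe dfw (col_mx dfdm fp) ee ew (col_mx edm ep) /\
    DB ((fB, - fp), (eB, ep)).

Definition pair_dagger (m p : nat) (a b : R) (Z : completeNormedModType R)
    (ipZ : Z -> Z -> R) (F3 E3 : completeNormedModType R)
    (ipF : F3 -> F3 -> R) (ipE : E3 -> E3 -> R)
    (j3 : F3 -> E3) (j3inv : E3 -> F3)
    (d td : ((R -> 'cV[R]_(m + p)) * Z * 'cV[R]_m * F3) *
            ((R -> 'cV[R]_(m + p)) * Z * 'cV[R]_m * E3)) : R :=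
  let: ((dfe, dfw, dfdm, fB), (ee, ew, edm, eB)) := d in
  let: ((tdfe, tdfw, tdfdm, tfB), (tee, tew, tedm, teB)) := td in
  L2ip a b dfe tee - ipZ dfw tew - dotv dfdm tedm + ipF fB (j3inv teB)
  + L2ip a b ee tdfe - ipZ ew tdfw - dotv edm tdfdm + ipE eB (j3 tfB).

End Defs.

(* Power balance of D^A: the H-terms cancel by adjointness, <P0 e, e> = 0 by skew-symmetry,
   and integration by parts for the absolutely continuous e_eps gives
   2 <P1 e_eps', e_eps> = [e_eps^T P1 e_eps]_a^b, which (P1 symmetric, 1/sqrt 2 scalings) is
   the boundary pairing, so <df_eps, e_eps> - <df_w, e_w> = <df_{d,n-p}, e_{d,n-p}> + <f_p, e_p>.
   A Dirac structure is isotropic, so at (f^B, -f_p, e^B, e_p) the pairing of D^B gives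
   <f^B, j3^-1 e^B> + <e^B, j3 f^B> = -2 <f_p, e_p>, and all terms of <d, d>_dagger cancel.
   Integration by parts for primitives of integrable functions comes from Fubini on the
   triangle t <= x of [a,b]^2. *)

From HB Require Import structures.
From mathcomp Require Import all_boot all_order all_algebra.
From mathcomp Require Import all_classical all_reals all_analysis.
From mathcomp Require Import measurable_realfun.
From mathcomp Require Import ring lra.
Set Implicit Arguments.
Unset Strict Implicit.
Unset Printing Implicit Defensive.

Import Order.TTheory GRing.Theory Num.Theory.
Import numFieldNormedType.Exports.
Local Open Scope classical_set_scope.
Local Open Scope ring_scope.

Section square_integrable.
Context d (T : measurableType d) (R : realType) (mu : {measure set T -> \bar R}).
Variable D : set T.
Hypothesis mD : measurable D.

Definition square_integrable (f : T -> R) :=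
  measurable_fun D f /\ mu.-integrable D (fun x => (f x ^+ 2)%:E).

Lemma Rintegral_sum (I : Type) (s : seq I) (F : I -> T -> R) :
  (forall k, mu.-integrable D (EFin \o F k)) ->
  \int[mu]_(x in D) (\sum_(k <- s) F k x) = \sum_(k <- s) \int[mu]_(x in D) F k x.
Proof.
move=> iF; elim: s => [|k s IHs].
  by under eq_Rintegral do rewrite big_nil; rewrite big_nil Rintegral_cst // mul0r.
under eq_Rintegral do rewrite big_cons.
rewrite big_cons RintegralD // ?IHs //.
have : mu.-integrable D (fun x => \sum_(k <- s) (F k x)%:E).
  by apply: integrable_sum => // j _; exact: iF.
by apply: eq_integrable => // x _ /=; rewrite sumEFin.
Qed.

Lemma square_integrable_mul f g :
  square_integrable f -> square_integrable g ->
  mu.-integrable D (EFin \o (fun x => f x * g x)).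
Proof.
move=> [mf if2] [mg ig2].
apply: (le_integrable mD _ _ (integrableD mD if2 ig2)) => [|x _].
  by apply/measurable_EFinP; exact: measurable_funM.
have amgm (u v : R) : 0 <= u -> 0 <= v -> u * v <= u ^+ 2 + v ^+ 2 by move=> *; nra.
rewrite /= lee_fin normrM [leRHS]ger0_norm ?addr_ge0 ?sqr_ge0 //.
by rewrite -(real_normK (num_real (f x))) -(real_normK (num_real (g x))) amgm.
Qed.

Lemma square_integrableD f g : square_integrable f -> square_integrable g ->
  square_integrable (fun x => f x + g x).
Proof.
move=> [mf if2] [mg ig2]; split; first exact: measurable_funD.
have i2 (h : T -> R) : mu.-integrable D (fun x => (h x ^+ 2)%:E) ->
    mu.-integrable D (fun x => (2 * h x ^+ 2)%:E).
  by move=> /(integrableZl mD 2); apply: eq_integrable => // x _; rewrite EFinM.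
apply: (le_integrable mD _ _ (integrableD mD (i2 _ if2) (i2 _ ig2))) => [|x _].
  by apply/measurable_EFinP; apply: measurable_funX; exact: measurable_funD.
rewrite /= lee_fin [leLHS]ger0_norm ?sqr_ge0 // [leRHS]ger0_norm; last first.
  by rewrite addr_ge0 // mulr_ge0 // sqr_ge0.
have := sqr_ge0 (f x - g x); nra.
Qed.

Lemma square_integrableZ c f : square_integrable f ->
  square_integrable (fun x => c * f x).
Proof.
move=> [mf if2]; split; first exact: measurable_funM.
have := integrableZl mD (c ^+ 2) if2.
by apply: eq_integrable => // x _; rewrite exprMn.
Qed.

Lemma square_integrable_sum (I : Type) (s : seq I) (F : I -> T -> R) :
  (forall k, square_integrable (F k)) ->
  square_integrable (fun x => \sum_(k <- s) F k x).
Proof.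
move=> sF; elim: s => [|k s IHs].
  split; first by under eq_fun do rewrite big_nil; exact: measurable_cst.
  by under eq_fun do rewrite big_nil expr0n /=; exact: integrable0.
by under eq_fun do rewrite big_cons; exact: square_integrableD.
Qed.

Lemma square_integrable_integrable f : (mu D < +oo)%E ->
  square_integrable f -> mu.-integrable D (EFin \o f).
Proof.
move=> muD sf; have s1 : square_integrable (cst 1).
  split; first exact: measurable_cst.
  have := measurable_bounded_integrable mD muD (measurable_cst (1 : R)) (@bounded_cst _ R 1 _ D).
  by apply: eq_integrable => // x _ /=; rewrite expr1n.
have := square_integrable_mul sf s1.
by apply: eq_integrable => // x _ /=; rewrite mulr1.
Qed.

Lemma integrable_restrict_setT f : mu.-integrable D (EFin \o f) ->
  mu.-integrable setT (EFin \o (f \_ D)).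
Proof. by move=> iD; rewrite -restrict_EFin; apply/(@integrable_mkcond _ _ _ mu D _ mD). Qed.

Lemma integral_restrict_EFin f : mu.-integrable D (EFin \o f) ->
  (\int[mu]_x ((f \_ D) x)%:E = (\int[mu]_(x in D) f x)%:E)%E.
Proof.
move=> iD; rewrite /Rintegral fineK; last exact: integrable_fin_num.
by rewrite [RHS]integral_mkcond restrict_EFin.
Qed.

End square_integrable.

Section integrable_tensor.
Context d1 d2 (T1 : measurableType d1) (T2 : measurableType d2) (R : realType).
Variables (m1 : {sigma_finite_measure set T1 -> \bar R})
  (m2 : {sigma_finite_measure set T2 -> \bar R}).

Lemma integrable_tensor (f : T1 -> R) (g : T2 -> R) :
  m1.-integrable setT (EFin \o f) -> m2.-integrable setT (EFin \o g) ->
  (m1 \x m2)%E.-integrable setT (fun z => (f z.1 * g z.2)%:E).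
Proof.
move=> /integrableP[mf ifoo] /integrableP[mg igoo].
move/measurable_EFinP in mf; move/measurable_EFinP in mg.
have mfg : measurable_fun setT (fun z : T1 * T2 => (f z.1 * g z.2)%:E).
  apply/measurable_EFinP; apply: measurable_funM.
    exact: (measurableT_comp mf measurable_fst).
  exact: (measurableT_comp mg measurable_snd).
have mnf : measurable_fun setT (fun x => (`|f x|)%:E).
  by apply/measurable_EFinP; exact: measurableT_comp.
have mng : measurable_fun setT (fun y => (`|g y|)%:E).
  by apply/measurable_EFinP; exact: measurableT_comp.
apply/(integrable12ltyP _ _ mfg).
under eq_integral => x _ do under eq_integral => y _ do rewrite /= normrM EFinM.
under eq_integral => x _ do rewrite ge0_integralZl //.
by rewrite ge0_integralZr ?lte_mul_pinfty ?ge0_fin_numE ?integral_ge0.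
Qed.

End integrable_tensor.

Section interval_integrals.
Context {R : realType}.
Notation mu := (@lebesgue_measure R).
Implicit Types (a b x y : R) (f u v : R -> R).

Lemma in_itv_ab a b x : (x \in itv_ab a b) = (a <= x <= b).
Proof. by apply/idP/idP => [/set_mem|/mem_set]. Qed.

Lemma itv_abE a b : itv_ab a b = `[a, b]%classic.
Proof. by apply/seteqP; split => x /=; rewrite in_itv. Qed.

(* The cast selects the Lebesgue sigma-algebra on [R], the one [lebesgue_measure] lives on. *)
Lemma measurable_itv_ab a b : measurable (itv_ab a b : set (measurableTypeR R)).
Proof. rewrite itv_abE; exact: measurable_itv. Qed.

Lemma lebesgue_measure_itv_ab_lty a b : (mu (itv_ab a b) < +oo)%E.
Proof.
rewrite itv_abE lebesgue_measure_itv /=; case: ifPn => // _.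
by rewrite -EFinD ltry.
Qed.

Lemma integrable_itv_abS a b c d f : a <= c -> d <= b ->
  mu.-integrable (itv_ab a b) (EFin \o f) -> mu.-integrable (itv_ab c d) (EFin \o f).
Proof.
move=> ac db; apply: integrableS; [exact: measurable_itv_ab..|] => x /= /andP[cx xd].
by rewrite /itv_ab /= (le_trans ac cx) (le_trans xd db).
Qed.

Lemma Rintegral_itv_ab_split a x b f : a <= x <= b ->
  mu.-integrable (itv_ab a b) (EFin \o f) ->
  \int[mu]_(t in itv_ab x b) f t =
  \int[mu]_(t in itv_ab a b) f t - \int[mu]_(t in itv_ab a x) f t.
Proof.
move=> /andP[ax xb] iab; rewrite !itv_abE.
rewrite Rintegral_itvB ?bnd_simp -?itv_abE // Rintegral_itv_obnd_cbnd //.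
apply: integrableS iab; [exact: measurable_itv_ab|exact: measurable_itv|] => t /=.
rewrite in_itv /= => /andP[xt tb]; rewrite /itv_ab /= tb andbT.
exact: (le_trans ax (ltW xt)).
Qed.

Definition lower_triangle : set (R * R) := [set z | z.2 <= z.1].

Lemma in_lower_triangle z : (z \in lower_triangle) = (z.2 <= z.1).
Proof. by apply/idP/idP => [/set_mem|/mem_set]. Qed.

Lemma measurable_lower_triangle : measurable lower_triangle.
Proof.
have mB : measurable_fun setT (fun z : R * R => z.1 - z.2).
  exact: measurable_funB measurable_fst measurable_snd.
have := mB measurableT _ (measurable_itv `[0, +oo[); rewrite setTI.
by congr measurable; apply/seteqP; split => z /=; rewrite in_itv /= andbT subr_ge0.
Qed.

Definition triangle_kernel a b u v (z : R * R) :=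
  (v \_ (itv_ab a b)) z.1 * (u \_ (itv_ab a b)) z.2 * \1_lower_triangle z.

Lemma integrable_triangle_kernel a b u v :
  mu.-integrable (itv_ab a b) (EFin \o u) -> mu.-integrable (itv_ab a b) (EFin \o v) ->
  (mu \x mu)%E.-integrable setT (EFin \o triangle_kernel a b u v).
Proof.
move=> iu iv; have mI := measurable_itv_ab a b.
have iVU := integrable_tensor (integrable_restrict_setT mI iv) (integrable_restrict_setT mI iu).
apply: (le_integrable measurableT _ _ iVU) => [|z _].
  apply/measurable_EFinP; apply: measurable_funM.
    by apply/measurable_EFinP; exact: (measurable_int _ iVU).
  exact: measurable_indic measurable_lower_triangle.
rewrite /triangle_kernel /= lee_fin normrM indicE.
by case: (_ \in _); rewrite ?normr1 ?normr0 ?mulr1 ?mulr0.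
Qed.

Lemma integral_triangle_kernel_xsection a b u v x :
  mu.-integrable (itv_ab a b) (EFin \o u) ->
  (\int[mu]_y (triangle_kernel a b u v (x, y))%:E =
   ((fun x => v x * \int[mu]_(t in itv_ab a x) u t) \_ (itv_ab a b) x)%:E)%E.
Proof.
move=> iu; rewrite patchE; case: ifPn => [|xI]; last first.
  rewrite -[RHS](integral0 mu setT); apply: eq_integral => y _.
  by rewrite /triangle_kernel patchE (negbTE xI) !mul0r.
rewrite in_itv_ab => /andP[ax xb]; have iux := integrable_itv_abS (lexx a) xb iu.
have ivux : mu.-integrable (itv_ab a x) (EFin \o (fun y => v x * u y)).
  have := integrableZl (measurable_itv_ab a x) (v x) iux.
  by apply: eq_integrable; [exact: measurable_itv_ab|] => y _; rewrite /= EFinM.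
rewrite -RintegralZl; [|exact: measurable_itv_ab|exact: iux].
rewrite -integral_restrict_EFin //; last exact: measurable_itv_ab.
apply: eq_integral => y _; congr EFin.
rewrite /triangle_kernel !patchE !in_itv_ab indicE in_lower_triangle /= ax xb.
have [ay|ya] := leP a y; have [yx|xy] := leP y x; have [yb|by_] := leP y b;
  rewrite /= ?mulr1 ?mulr0 ?mul0r //; lra.
Qed.

Lemma integral_triangle_kernel_ysection a b u v y :
  mu.-integrable (itv_ab a b) (EFin \o v) ->
  (\int[mu]_x (triangle_kernel a b u v (x, y))%:E =
   ((fun y => u y * \int[mu]_(t in itv_ab y b) v t) \_ (itv_ab a b) y)%:E)%E.
Proof.
move=> iv; rewrite patchE; case: ifPn => [|yI]; last first.
  rewrite -[RHS](integral0 mu setT); apply: eq_integral => x _.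
  by rewrite /triangle_kernel (patchE u _ y) (negbTE yI) mulr0 mul0r.
rewrite in_itv_ab => /andP[ay yb]; have ivy := integrable_itv_abS ay (lexx b) iv.
have iuvy : mu.-integrable (itv_ab y b) (EFin \o (fun x => u y * v x)).
  have := integrableZl (measurable_itv_ab y b) (u y) ivy.
  by apply: eq_integrable; [exact: measurable_itv_ab|] => x _; rewrite /= EFinM.
rewrite -RintegralZl; [|exact: measurable_itv_ab|exact: ivy].
rewrite -integral_restrict_EFin //; last exact: measurable_itv_ab.
apply: eq_integral => x _; congr EFin.
rewrite /triangle_kernel !patchE !in_itv_ab indicE in_lower_triangle /= ay yb.
have [ax|xa] := leP a x; have [yx|xy] := leP y x; have [xb|bx] := leP x b;
  rewrite /= ?mulr1 ?mulr0 ?mul0r ?[v x * u y]mulrC //; lra.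
Qed.

Lemma Rintegral_triangle_swap a b u v :
  mu.-integrable (itv_ab a b) (EFin \o u) -> mu.-integrable (itv_ab a b) (EFin \o v) ->
  mu.-integrable (itv_ab a b)
    (EFin \o (fun x => v x * \int[mu]_(t in itv_ab a x) u t)) ->
  mu.-integrable (itv_ab a b)
    (EFin \o (fun y => u y * \int[mu]_(t in itv_ab y b) v t)) ->
  \int[mu]_(x in itv_ab a b) (v x * \int[mu]_(t in itv_ab a x) u t) =
  \int[mu]_(y in itv_ab a b) (u y * \int[mu]_(t in itv_ab y b) v t).
Proof.
move=> iu iv ivU iuV; have := Fubini (integrable_triangle_kernel iu iv).
under eq_integral do rewrite integral_triangle_kernel_xsection //.
under [X in _ = X]eq_integral do rewrite integral_triangle_kernel_ysection //.
have mI := measurable_itv_ab a b.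
by rewrite !integral_restrict_EFin // => -[].
Qed.

Lemma Rintegral_mul_primitive_sym a b u v :
  mu.-integrable (itv_ab a b) (EFin \o u) -> mu.-integrable (itv_ab a b) (EFin \o v) ->
  mu.-integrable (itv_ab a b)
    (EFin \o (fun x => v x * \int[mu]_(t in itv_ab a x) u t)) ->
  mu.-integrable (itv_ab a b)
    (EFin \o (fun x => u x * \int[mu]_(t in itv_ab a x) v t)) ->
  \int[mu]_(x in itv_ab a b) (v x * \int[mu]_(t in itv_ab a x) u t) +
  \int[mu]_(x in itv_ab a b) (u x * \int[mu]_(t in itv_ab a x) v t) =
  \int[mu]_(x in itv_ab a b) u x * \int[mu]_(x in itv_ab a b) v x.
Proof.
move=> iu iv ivu iuv; have mI := measurable_itv_ab a b.
set V := \int[mu]_(x in itv_ab a b) v x.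
have tail y : itv_ab a b y ->
    u y * \int[mu]_(t in itv_ab y b) v t = u y * V - u y * \int[mu]_(t in itv_ab a y) v t.
  by move=> yI; rewrite (Rintegral_itv_ab_split yI iv) mulrBr.
have iuV : mu.-integrable (itv_ab a b) (EFin \o (fun y => u y * V)).
  have := integrableZl mI V iu.
  by apply: eq_integrable => // y _; rewrite /= mulrC.
rewrite Rintegral_triangle_swap //; last first.
  have := integrableB mI iuV iuv.
  by apply: eq_integrable => // y /set_mem yI; rewrite /= tail.
under eq_Rintegral => y yI do rewrite (tail y (set_mem yI)).
by rewrite RintegralB // RintegralZr // subrK.
Qed.

Definition primitive_on a b (e g : R -> R) :=
  forall x, a <= x <= b -> e x = e a + \int[mu]_(t in itv_ab a x) g t.

Lemma Rintegral_mul_primitive a b g h e : primitive_on a b e h ->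
  mu.-integrable (itv_ab a b) (EFin \o g) ->
  mu.-integrable (itv_ab a b) (EFin \o (fun x => g x * e x)) ->
  mu.-integrable (itv_ab a b)
    (EFin \o (fun x => g x * \int[mu]_(t in itv_ab a x) h t)) /\
  \int[mu]_(x in itv_ab a b) (g x * e x) =
  e a * \int[mu]_(x in itv_ab a b) g x +
  \int[mu]_(x in itv_ab a b) (g x * \int[mu]_(t in itv_ab a x) h t).
Proof.
move=> eh ig ige; have mI := measurable_itv_ab a b.
have ieg := integrableZl mI (e a) ig.
have ighI : mu.-integrable (itv_ab a b)
    (EFin \o (fun x => g x * \int[mu]_(t in itv_ab a x) h t)).
  have := integrableB mI ige ieg.
  by apply: eq_integrable => // x /set_mem xI; rewrite /= (eh x xI); congr EFin; ring.
split => //; rewrite -RintegralZl // -RintegralD //.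
by apply: eq_Rintegral => x /set_mem xI; rewrite (eh x xI); ring.
Qed.

Lemma integration_by_parts_primitive a b gi gk ei ek : a <= b ->
  primitive_on a b ei gi -> primitive_on a b ek gk ->
  mu.-integrable (itv_ab a b) (EFin \o gi) -> mu.-integrable (itv_ab a b) (EFin \o gk) ->
  mu.-integrable (itv_ab a b) (EFin \o (fun x => gk x * ei x)) ->
  mu.-integrable (itv_ab a b) (EFin \o (fun x => gi x * ek x)) ->
  \int[mu]_(x in itv_ab a b) (gk x * ei x) + \int[mu]_(x in itv_ab a b) (gi x * ek x) =
  ei b * ek b - ei a * ek a.
Proof.
move=> ab ei_gi ek_gk igi igk igkei igiek.
have [igkI ->] := Rintegral_mul_primitive ei_gi igk igkei.
have [igiI ->] := Rintegral_mul_primitive ek_gk igi igiek.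
have bI : a <= b <= b by rewrite ab lexx.
rewrite (ei_gi b bI) (ek_gk b bI).
have := Rintegral_mul_primitive_sym igi igk igkI igiI; lra.
Qed.

End interval_integrals.

Section dotv.
Context {R : realType}.

Lemma sum_trmx_swap n (A : 'M[R]_n) (F : 'I_n -> 'I_n -> R) :
  \sum_i \sum_k A i k * F k i = \sum_i \sum_k A^T i k * F i k.
Proof. by rewrite exchange_big; apply: eq_bigr => i _; apply: eq_bigr => k _; rewrite mxE. Qed.

Lemma dotvC k (u v : 'cV[R]_k) : dotv u v = dotv v u.
Proof. by apply: eq_bigr => i _; rewrite mulrC. Qed.

Lemma dotvNl k (u v : 'cV[R]_k) : dotv (- u) v = - dotv u v.
Proof. by rewrite /dotv -sumrN; apply: eq_bigr => i _; rewrite mxE mulNr. Qed.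

Lemma dotvZl k c (u v : 'cV[R]_k) : dotv (c *: u) v = c * dotv u v.
Proof. by rewrite /dotv mulr_sumr; apply: eq_bigr => i _; rewrite mxE mulrA. Qed.

Lemma dotvZr k c (u v : 'cV[R]_k) : dotv u (c *: v) = c * dotv u v.
Proof. by rewrite dotvC dotvZl dotvC. Qed.

Lemma dotv_col_mx m p (u1 v1 : 'cV[R]_m) (u2 v2 : 'cV[R]_p) :
  dotv (col_mx u1 u2) (col_mx v1 v2) = dotv u1 v1 + dotv u2 v2.
Proof.
by rewrite /dotv big_split_ord; congr (_ + _); apply: eq_bigr => i _;
  rewrite ?col_mxEu ?col_mxEd.
Qed.

Lemma dotv_mulmxl n (A : 'M[R]_n) (u v : 'cV[R]_n) :
  dotv (A *m u) v = \sum_i \sum_k A i k * (u k 0 * v i 0).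
Proof.
apply: eq_bigr => i _; rewrite mxE mulr_suml.
by apply: eq_bigr => k _; rewrite mulrA.
Qed.

Lemma dotv_sym_subr_sqr n (A : 'M[R]_n) (x y : 'cV[R]_n) : A^T = A ->
  dotv (A *m (x - y)) (x + y) = dotv (A *m x) x - dotv (A *m y) y.
Proof.
move=> sA; rewrite !dotv_mulmxl.
have cross : \sum_i \sum_k A i k * (y k 0 * x i 0) = \sum_i \sum_k A i k * (x k 0 * y i 0).
  rewrite sum_trmx_swap sA; apply: eq_bigr => i _; apply: eq_bigr => k _.
  by rewrite (mulrC (y i 0)).
have expand i k : A i k * ((x - y) k 0 * (x + y) i 0) =
    (A i k * (x k 0 * x i 0) - A i k * (y k 0 * y i 0)) +
    (A i k * (x k 0 * y i 0) - A i k * (y k 0 * x i 0)).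
  by rewrite !mxE; ring.
under eq_bigr do under eq_bigr do rewrite expand.
under eq_bigr do rewrite big_split /= !sumrB.
by rewrite big_split /= !sumrB cross subrr addr0.
Qed.

End dotv.

Section L2.
Context {R : realType}.
Notation mu := (@lebesgue_measure R).
Variables (a b : R) (n : nat).
Implicit Types (u v w : R -> 'cV[R]_n).

Lemma L2P u : L2 a b u <-> forall i, square_integrable mu (itv_ab a b) (fun x => u x i 0).
Proof. by []. Qed.

Lemma integrable_L2_mul u v i k : L2 a b u -> L2 a b v ->
  mu.-integrable (itv_ab a b) (EFin \o (fun x => u x i 0 * v x k 0)).
Proof.
move=> /L2P Lu /L2P Lv.
exact (square_integrable_mul (measurable_itv_ab a b) (Lu i) (Lv k)).
Qed.

Lemma L2D u v : L2 a b u -> L2 a b v -> L2 a b (fun x => u x + v x).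
Proof.
move=> /L2P Lu /L2P Lv; apply/L2P => i.
have -> : (fun x => (u x + v x) i 0) = (fun x => u x i 0 + v x i 0).
  by apply/funext => x; rewrite mxE.
exact (square_integrableD (measurable_itv_ab a b) (Lu i) (Lv i)).
Qed.

Lemma L2Z c u : L2 a b u -> L2 a b (fun x => c *: u x).
Proof.
move=> /L2P Lu; apply/L2P => i.
have -> : (fun x => (c *: u x) i 0) = (fun x => c * u x i 0).
  by apply/funext => x; rewrite mxE.
exact (square_integrableZ (measurable_itv_ab a b) c (Lu i)).
Qed.

Lemma L2_mulmx (A : 'M[R]_n) u : L2 a b u -> L2 a b (fun x => A *m u x).
Proof.
move=> /L2P Lu; apply/L2P => i.
have -> : (fun x => (A *m u x) i 0) = (fun x => \sum_k A i k * u x k 0).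
  by apply/funext => x; rewrite mxE.
exact (square_integrable_sum (measurable_itv_ab a b) _
  (fun k => square_integrableZ (measurable_itv_ab a b) (A i k) (Lu k))).
Qed.

Lemma L2ipC u v : L2ip a b u v = L2ip a b v u.
Proof. by apply: eq_bigr => i _; apply: eq_Rintegral => x _; rewrite mulrC. Qed.

Lemma L2ipDl u w v : L2 a b u -> L2 a b w -> L2 a b v ->
  L2ip a b (fun x => u x + w x) v = L2ip a b u v + L2ip a b w v.
Proof.
move=> Lu Lw Lv; rewrite /L2ip -big_split; apply: eq_bigr => i _ /=.
rewrite -RintegralD; [|exact: measurable_itv_ab|exact: integrable_L2_mul..].
by apply: eq_Rintegral => x _; rewrite mxE mulrDl.
Qed.

Lemma L2ipZl c u v : L2 a b u -> L2 a b v ->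
  L2ip a b (fun x => c *: u x) v = c * L2ip a b u v.
Proof.
move=> Lu Lv; rewrite /L2ip mulr_sumr; apply: eq_bigr => i _.
rewrite -RintegralZl; [|exact: measurable_itv_ab|exact: integrable_L2_mul].
by apply: eq_Rintegral => x _; rewrite mxE mulrA.
Qed.

Lemma L2ip_mulmxl (A : 'M[R]_n) u v : L2 a b u -> L2 a b v ->
  L2ip a b (fun x => A *m u x) v =
  \sum_i \sum_k A i k * \int[mu]_(x in itv_ab a b) (u x k 0 * v x i 0).
Proof.
move=> Lu Lv; have mI := measurable_itv_ab a b.
apply: eq_bigr => i _.
under eq_Rintegral => x _.
  rewrite mxE mulr_suml; under eq_bigr do rewrite -mulrA.
  over.
rewrite Rintegral_sum // => [|k].
  by apply: eq_bigr => k _; rewrite RintegralZl // integrable_L2_mul.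
have := integrableZl mI (A i k) (integrable_L2_mul k i Lu Lv).
by apply: eq_integrable => // x _; rewrite /= EFinM.
Qed.

Lemma L2ip_eq_ae u w v : L2 a b u -> L2 a b w -> L2 a b v -> L2eq a b u w ->
  L2ip a b u v = L2ip a b w v.
Proof.
move=> Lu Lw Lv uw; apply: eq_bigr => i _; congr fine.
apply: ae_eq_integral; first exact: measurable_itv_ab.
- exact: measurable_int (integrable_L2_mul i i Lu Lv).
- exact: measurable_int (integrable_L2_mul i i Lw Lv).
move: uw; rewrite /L2eq /ae_eq; apply: (@filterS _ _ (ae_filter_ringOfSetsType mu)).
by move=> x uwx xI; rewrite /= uwx.
Qed.

End L2.

Section port_Hamiltonian.
Context {R : realType}.
Notation mu := (@lebesgue_measure R).
Variables (a b : R) (n : nat).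

Lemma H1_with_deriv_primitive (e g : R -> 'cV[R]_n) i : H1_with_deriv a b e g ->
  primitive_on a b (fun x => e x i 0) (fun x => g x i 0).
Proof. by move=> [_ eg] x xI; exact: eg. Qed.

Lemma L2ip_mulmx_skew (A : 'M[R]_n) e : A^T = - A -> L2 a b e ->
  L2ip a b (fun x => A *m e x) e = 0.
Proof.
move=> sA Le; rewrite L2ip_mulmxl //.
set S := (X in X = 0); suff : S = - S by lra.
rewrite {1}/S sum_trmx_swap sA -sumrN; apply: eq_bigr => i _.
rewrite -sumrN; apply: eq_bigr => k _; rewrite !mxE mulNr.
by congr (- (_ * _)); apply: eq_Rintegral => x _; rewrite mulrC.
Qed.

Lemma L2ip_mulmx_sym_H1 (A : 'M[R]_n) e g : a <= b -> A^T = A -> L2 a b e ->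
  H1_with_deriv a b e g ->
  2 * L2ip a b (fun x => A *m g x) e = dotv (A *m e b) (e b) - dotv (A *m e a) (e a).
Proof.
move=> ab sA Le eg; have [Lg _] := eg; rewrite L2ip_mulmxl // !dotv_mulmxl.
set S := (X in 2 * X = _).
have S' : S = \sum_i \sum_k A i k * \int[mu]_(x in itv_ab a b) (g x i 0 * e x k 0).
  by rewrite /S sum_trmx_swap sA.
have ibp i k : A i k * \int[mu]_(x in itv_ab a b) (g x k 0 * e x i 0) +
    A i k * \int[mu]_(x in itv_ab a b) (g x i 0 * e x k 0) =
    A i k * (e b k 0 * e b i 0) - A i k * (e a k 0 * e a i 0).
  have intg j : mu.-integrable (itv_ab a b) (EFin \o (fun x => g x j 0)).
    exact (square_integrable_integrable (measurable_itv_ab a b)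
      (lebesgue_measure_itv_ab_lty a b) ((L2P _ _ _).1 Lg j)).
  rewrite -mulrDr (integration_by_parts_primitive ab) //; first by ring.
  - exact: H1_with_deriv_primitive.
  - exact: H1_with_deriv_primitive.
  - exact: integrable_L2_mul.
  - exact: integrable_L2_mul.
have -> : 2 * S = S + S by ring.
rewrite {2}S' -big_split; under eq_bigr do rewrite -big_split.
under eq_bigr do under eq_bigr do rewrite /= ibp.
by under eq_bigr do rewrite sumrB; rewrite sumrB.
Qed.

End port_Hamiltonian.

Lemma DA_power_balance (R : realType) (a b : R) (m p : nat) (P1 P0 : 'M[R]_(m + p))
    (Z : completeNormedModType R) (ipZ : Z -> Z -> R)
    (H : Z -> R -> 'cV[R]_(m + p)) (Hs : (R -> 'cV[R]_(m + p)) -> Z) (dt : R)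
    dfe dfw dfd ee ew ed :
  a <= b -> P1^T = P1 -> P0^T = - P0 ->
  (forall z, L2 a b (H z)) -> is_adjoint a b ipZ H Hs ->
  DA a b P1 P0 H Hs dt dfe dfw dfd ee ew ed ->
  L2ip a b dfe ee - ipZ dfw ew = dotv dfd ed.
Proof.
move=> ab sP1 sP0 LH Hadj [[Ldfe Lee] [g [[Lg eg] dfeE]] -> -> ->].
have LP1g := L2_mulmx P1 Lg; have LP0e := L2_mulmx P0 Lee.
have LJ := L2D LP1g LP0e.
rewrite (L2ip_eq_ae Ldfe (L2D (L2Z dt LJ) (LH dfw)) Lee dfeE).
rewrite (L2ipDl (L2Z dt LJ) (LH dfw) Lee) (L2ipZl dt LJ Lee) (L2ipDl LP1g LP0e Lee).
rewrite L2ip_mulmx_skew // addr0 -Hadj // addrK.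
rewrite dotvZl dotvZr dotv_sym_subr_sqr //.
rewrite -(L2ip_mulmx_sym_H1 ab sP1 Lee (conj Lg eg)).
have sqrt2 : (Num.sqrt 2 : R) ^-1 * (Num.sqrt 2)^-1 = 2^-1.
  by rewrite -invfM -expr2 sqr_sqrtr // ler0n.
have regroup (s L : R) : s * dt * (s * (2 * L)) = s * s * 2 * (dt * L) by ring.
by rewrite regroup sqrt2 mulVf ?mul1r // pnatr_eq0.
Qed.

Lemma dirac_structure_isotropic (R : realType) (V : lmodType R) (pair : V -> V -> R)
    (D : set V) x :
  dirac_structure pair D -> D x -> pair x x = 0.
Proof. by move=> [_ _ DP] Dx; exact: ((DP x).1 Dx x Dx). Qed.

Theorem lemma2 (R : realType) (a b : R) (m p : nat)
  (P1 P0 : 'M[R]_(m + p))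
  (Z : completeNormedModType R) (ipZ : Z -> Z -> R)
  (H : Z -> R -> 'cV[R]_(m + p)) (Hs : (R -> 'cV[R]_(m + p)) -> Z) (dt : R)
  (F3 E3 : completeNormedModType R)
  (ipF : F3 -> F3 -> R) (ipE : E3 -> E3 -> R)
  (j3 : F3 -> E3) (j3inv : E3 -> F3)
  (DB : set ((F3 * 'cV[R]_p) * (E3 * 'cV[R]_p))) :
  a < b -> (1 <= p)%N ->
  P1^T = P1 -> P1 \in unitmx -> P0^T = - P0 ->
  hilbert_ip ipZ ->
  bounded_linear_to_L2 a b H -> is_adjoint a b ipZ H Hs ->
  0 < dt ->
  hilbert_ip ipF -> hilbert_ip ipE ->
  (forall (c : R) x y, j3 (c *: x + y) = c *: j3 x + j3 y) ->
  cancel j3 j3inv -> cancel j3inv j3 ->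
  (forall x y, ipE (j3 x) (j3 y) = ipF x y) ->
  dirac_structure (pairB ipF ipE j3 j3inv) DB ->
  forall dfe dfw dfdm fB ee ew edm eB,
    DAoDB a b P1 P0 H Hs dt DB dfe dfw dfdm fB ee ew edm eB ->
    pair_dagger a b ipZ ipF ipE j3 j3inv
      ((dfe, dfw, dfdm, fB), (ee, ew, edm, eB))
      ((dfe, dfw, dfdm, fB), (ee, ew, edm, eB)) = 0.
Proof.
move=> ab _ sP1 _ sP0 [ipZC _ _] [LH _ _] Hadj _ _ _ _ _ _ _ DBdirac
  dfe dfw dfdm fB ee ew edm eB [fp [ep [inDA inDB]]].
have := DA_power_balance (ltW ab) sP1 sP0 LH Hadj inDA; rewrite dotv_col_mx.
have := dirac_structure_isotropic DBdirac inDB; rewrite /pairB /= dotvNl (dotvC ep) dotvNl.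
by rewrite (L2ipC a b ee) (ipZC ew) (dotvC edm); lra.
Qed.
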